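(* Let $(\mathscr C,A,\psi)$ be an entwining structure over a field $K$. Then $(F_\psi,G_\psi)$ is a pair of adjoint functors, i.e., there are isomorphisms $Com^{\mathscr C}_A(\psi)(\mathcal M\otimes A,\mathcal N)\cong Com^{\mathscr C}(\mathcal M,\mathcal N)$ natural in $\mathcal M\in Com^{\mathscr C}$ and $\mathcal N\in Com^{\mathscr C}_A(\psi)$.
   Context: A $K$-coalgebra with several objects $\mathscr C$: a set $Ob(\mathscr C)$, vector spaces $\mathscr C(X,Y)$, linear comultiplications $\delta_{XYZ}:\mathscr C(X,Z)\to\mathscr C(Y,Z)\otimes\mathscr C(X,Y)$, $\delta_{XYZ}(f)=f_{Y1}\otimes f_{Y2}$, and counits $\epsilon_X:\mathscr C(X,X)\to K$, coassociative and counital in the sense $(\delta_{YWZ}\otimes\mathrm{id})\circ\delta_{XYZ}=(\mathrm{id}\otimes\delta_{XYW})\circ\delta_{XWZ}$, $(\epsilon_Y\otimes\mathrm{id})\circ\delta_{XYY}=\mathrm{id}=(\mathrm{id}\otimes\epsilon_X)\circ\delta_{XXY}$. For a $K$-algebra $A$ (multiplication $\mu_A$), an entwining structure $(\mathscr C,A,\psi)$ is a family of linear maps $\psi_{XY}:\mathscr C(X,Y)\otimes A\to A\otimes\mathscr C(X,Y)$, $\psi_{XY}(f\otimes a)=a_\psi\otimes f^\psi$, with (i) $(\mathrm{id}_A\otimes\delta_{XYZ})\circ\psi_{XZ}=(\psi_{YZ}\otimes\mathrm{id})\circ(\mathrm{id}\otimes\psi_{XY})\circ(\delta_{XYZ}\otimes\mathrm{id}_A)$;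 (ii) $\psi_{XZ}\circ(\mathrm{id}\otimes\mu_A)=(\mu_A\otimes\mathrm{id})\circ(\mathrm{id}_A\otimes\psi_{XZ})\circ(\psi_{XZ}\otimes\mathrm{id}_A)$; (iii) $\psi_{XZ}(f\otimes1)=1\otimes f$; (iv) $\epsilon_Z(g^\psi)a_\psi=\epsilon_Z(g)a$ for $g\in\mathscr C(Z,Z)$. $Com^{\mathscr C}$ is the category of right $\mathscr C$-comodules: families $\mathcal M(X)$ with coactions $\rho_{XY}:\mathcal M(X)\to\mathcal M(Y)\otimes\mathscr C(X,Y)$, $m\mapsto m_{Y0}\otimes m_{Y1}$, with $(\rho_{ZY}\otimes\mathrm{id})\rho_{XZ}=(\mathrm{id}\otimes\delta_{XZY})\rho_{XY}$, $(\mathrm{id}\otimes\epsilon_X)\rho_{XX}=\mathrm{id}$, and morphisms the families of linear maps commuting with coactions. $Com^{\mathscr C}_A(\psi)$ is the category of entwined comodules: comodules with right $A$-module structures on each $\mathcal M(X)$ such that $\rho_{XY}(ma)=m_{Y0}a_\psi\otimes(m_{Y1})^\psi$, with morphisms the comodule morphisms having $A$-linear components. $F_\psi:Com^{\mathscr C}\to Com^{\mathscr C}_A(\psi)$ sends $\mathcal M$ to $\mathcal M\otimes A$ with $(\mathcal M\otimes A)(X)=\mathcal M(X)\otimes A$, right action $(m\otimes a)b=m\otimes ab$ and coaction $m\otimes a\mapsto m_{Y0}\otimes a_\psi\otimes(m_{Y1})^\psi$, and a morphism $\phi$ to $\phi\otimes\mathrm{id}_A$. $G_\psi:Com^{\mathscr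 C}_A(\psi)\to Com^{\mathscr C}$ is the forgetful functor. *)

From HB Require Import structures.
From mathcomp Require Import all_boot all_order all_algebra generic_quotient.
From mathcomp Require Import boolp.
Set Implicit Arguments. Unset Strict Implicit. Unset Printing Implicit Defensive.
Import GRing.Theory.
Local Open Scope ring_scope.
Local Open Scope quotient_scope.

Section Tensor.
Variable K : fieldType.

Definition bilinear_map (V W U : lmodType K) (b : V -> W -> U) : Prop :=
  (forall w, linear (b^~ w)) /\ (forall v, linear (b v)).

Definition tsum (V W U : lmodType K) (b : V -> W -> U) (s : seq (V * W)) : U :=
  \sum_(p <- s) b p.1 p.2.

Definition tens_rel (V W : lmodType K) (s t : seq (V * W)) : Prop :=
  forall (U : lmodType K) (b : V -> W -> U), bilinear_map b -> tsum b s = tsum b t.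

Variables V W : lmodType K.

Definition tens_relb : rel (seq (V * W)) := fun s t => `[< tens_rel s t >].

Lemma tens_relb_equiv : equiv_class_of tens_relb.
Proof.
split.
- by move=> s; apply/asboolP.
- by move=> s t; apply/asboolP/asboolP => H U b hb; rewrite H.
- by move=> t s u /asboolP H1 /asboolP H2; apply/asboolP => U b hb; rewrite H1 ?H2.
Qed.

Canonical tens_equiv := EquivRelPack tens_relb_equiv.

Definition tensor := {eq_quot tens_equiv}.
Local Notation T := (tensor).
HB.instance Definition _ := Choice.copy T {eq_quot tens_equiv}.
Definition tpi (s : seq (V * W)) : T := \pi_T s.

Lemma lin0 (X Y : lmodType K) (f : X -> Y) : linear f -> f 0 = 0.
Proof. move=> lf; have := lf 1 0 0; rewrite !scale1r addr0 => H.
by have := etrans (addr0 _) H => /addrI. Qed.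
Lemma linD (X Y : lmodType K) (f : X -> Y) : linear f -> forall u v, f (u + v) = f u + f v.
Proof. by move=> lf u v; have := lf 1 u v; rewrite !scale1r. Qed.
Lemma linZ (X Y : lmodType K) (f : X -> Y) : linear f -> forall k u, f (k *: u) = k *: f u.
Proof. by move=> lf k u; have := lf k u 0; rewrite !addr0 lin0 // addr0. Qed.
Lemma linN (X Y : lmodType K) (f : X -> Y) : linear f -> forall u, f (- u) = - f u.
Proof. by move=> lf u; rewrite -scaleN1r linZ // scaleN1r. Qed.

Lemma tsum_repr (U : lmodType K) (b : V -> W -> U) s :
  bilinear_map b -> tsum b (repr (tpi s)) = tsum b s.
Proof.
move=> hb; have /eqmodP /asboolP H : repr (tpi s) = s %[mod T] by rewrite reprK.
exact: H.
Qed.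

Lemma tensor_ext (x y : T) :
  (forall (U : lmodType K) (b : V -> W -> U), bilinear_map b -> tsum b (repr x) = tsum b (repr y)) -> x = y.
Proof. by move=> H; rewrite -[x]reprK -[y]reprK; apply/eqmodP/asboolP. Qed.

Lemma tsum_cat (U : lmodType K) (b : V -> W -> U) s t : tsum b (s ++ t) = tsum b s + tsum b t.
Proof. exact: big_cat. Qed.

Lemma tsum_scale (U : lmodType K) (b : V -> W -> U) k s : bilinear_map b ->
  tsum b (map (fun p => (k *: p.1, p.2)) s) = k *: tsum b s.
Proof.
move=> [hb _]; rewrite /tsum big_map scaler_sumr; apply: eq_bigr => p _ /=.
exact: (linZ (hb p.2)).
Qed.

Definition tadd (x y : T) : T := tpi (repr x ++ repr y).
Definition tscale (k : K) (x : T) : T := tpi (map (fun p => (k *: p.1, p.2)) (repr x)).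
Definition topp (x : T) : T := tscale (-1) x.
Definition tzero : T := tpi [::].

Lemma taddA : associative tadd.
Proof. by move=> x y z; apply: tensor_ext => U b hb; rewrite !tsum_repr // !tsum_cat !tsum_repr // !tsum_cat addrA. Qed.
Lemma taddC : commutative tadd.
Proof. by move=> x y; apply: tensor_ext => U b hb; rewrite !tsum_repr // !tsum_cat addrC. Qed.
Lemma tadd0 : left_id tzero tadd.
Proof. by move=> x; apply: tensor_ext => U b hb; rewrite !tsum_repr // !tsum_cat tsum_repr // /tsum big_nil add0r. Qed.
Lemma taddN : left_inverse tzero topp tadd.
Proof.
move=> x; apply: tensor_ext => U b hb; rewrite !tsum_repr // !tsum_cat tsum_repr //.
by rewrite tsum_scale // scaleN1r addNr /tsum big_nil.
Qed.

HB.instance Definition _ := GRing.isZmodule.Build T taddA taddC tadd0 taddN.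

Lemma tscaleA a b' (x : T) : tscale a (tscale b' x) = tscale (a * b') x.
Proof. by apply: tensor_ext => U b hb; rewrite !tsum_repr // !tsum_scale // ?tsum_repr // tsum_scale // scalerA. Qed.
Lemma tscale1 : left_id 1 tscale.
Proof. by move=> x; apply: tensor_ext => U b hb; rewrite tsum_repr // tsum_scale // scale1r. Qed.
Lemma tscaleDr : right_distributive tscale (@GRing.add T).
Proof.
move=> a x y; apply: tensor_ext => U b hb.
rewrite /GRing.add /= /tadd !tsum_repr // tsum_scale // tsum_repr // !tsum_cat !tsum_repr //.
by rewrite !tsum_scale // scalerDr.
Qed.
Lemma tscaleDl (x : T) : {morph tscale^~ x : a b' / a + b'}.
Proof.
move=> a c; apply: tensor_ext => U b hb.
rewrite /GRing.add /= /tadd !tsum_repr // tsum_scale // !tsum_cat !tsum_repr //.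
by rewrite !tsum_scale // scalerDl.
Qed.

HB.instance Definition _ := GRing.Zmodule_isLmodule.Build K T tscaleA tscale1 tscaleDr tscaleDl.
End Tensor.

Section TensorOps.
Variable K : fieldType.

Definition tpure (V W : lmodType K) (v : V) (w : W) : tensor V W := tpi [:: (v, w)].

Definition tlift (V W U : lmodType K) (b : V -> W -> U) (x : tensor V W) : U :=
  tsum b (repr x).

Definition tmap (V W V' W' : lmodType K) (f : V -> V') (g : W -> W') :
  tensor V W -> tensor V' W' := tlift (fun v w => tpure (f v) (g w)).

Definition tassoc (U V W : lmodType K) : tensor (tensor U V) W -> tensor U (tensor V W) :=
  tlift (fun x w => tlift (fun u v => tpure u (tpure v w)) x).

Definition tassoc_inv (U V W : lmodType K) : tensor U (tensor V W) -> tensor (tensor U V) W :=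
  tlift (fun u y => tlift (fun v w => tpure (tpure u v) w) y).

Definition tlunit (V : lmodType K) : tensor K^o V -> V := tlift (fun (k : K^o) (v : V) => k *: v).
Definition trunit (V : lmodType K) : tensor V K^o -> V := tlift (fun (v : V) (k : K^o) => k *: v).
End TensorOps.

Section Entwining.
Local Unset Implicit Arguments.
Variables (K : fieldType) (Ob : Type).

Definition is_coalgebra (C : Ob -> Ob -> lmodType K)
    (delta : forall X Y Z, C X Z -> tensor (C Y Z) (C X Y))
    (eps : forall X, C X X -> K^o) : Prop :=
  [/\ (forall X Y Z, linear (delta X Y Z)),
      (forall X, linear (eps X)),
      (forall X Y W Z (f : C X Z),
          tassoc (tmap (delta Y W Z) id (delta X Y Z f))
          = tmap id (delta X Y W) (delta X W Z f)),
      (forall X Y (f : C X Y), tlunit (tmap (eps Y) id (delta X Y Y f)) = f) &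
      (forall X Y (f : C X Y), trunit (tmap id (eps X) (delta X X Y f)) = f)].

Definition alg_mul (A : algType K) : tensor A A -> A := tlift (fun a b : A => a * b).

Definition is_entwining (C : Ob -> Ob -> lmodType K)
    (delta : forall X Y Z, C X Z -> tensor (C Y Z) (C X Y))
    (eps : forall X, C X X -> K^o) (A : algType K)
    (psi : forall X Y, tensor (C X Y) A -> tensor A (C X Y)) : Prop :=
  [/\ (forall X Y, linear (psi X Y)),
      (forall X Y Z (t : tensor (C X Z) A),
          tmap id (delta X Y Z) (psi X Z t)
          = tassoc (tmap (psi Y Z) id
              (tassoc_inv (tmap id (psi X Y) (tassoc (tmap (delta X Y Z) id t)))))),
      (forall X Z (t : tensor (C X Z) (tensor A A)),
          psi X Z (tmap id (@alg_mul A) t)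
          = tmap (@alg_mul A) id
              (tassoc_inv (tmap id (psi X Z) (tassoc (tmap (psi X Z) id (tassoc_inv t)))))),
      (forall X Z (f : C X Z), psi X Z (tpure f 1) = tpure 1 f) &
      (forall Z (g : C Z Z) (a : A), trunit (tmap id (eps Z) (psi Z Z (tpure g a))) = eps Z g *: a)].

Variable C : Ob -> Ob -> lmodType K.
Variable delta : forall X Y Z, C X Z -> tensor (C Y Z) (C X Y).
Variable eps : forall X, C X X -> K^o.

Record comodule := Comodule {
  cm_obj : Ob -> lmodType K;
  cm_coact : forall X Y, cm_obj X -> tensor (cm_obj Y) (C X Y) }.

Definition is_comodule (M : comodule) : Prop :=
  [/\ (forall X Y, linear (cm_coact M X Y)),
      (forall X Z Y (m : cm_obj M X),
          tassoc (tmap (cm_coact M Z Y) id (cm_coact M X Z m))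
          = tmap id (@delta X Z Y) (cm_coact M X Y m)) &
      (forall X (m : cm_obj M X), trunit (tmap id (@eps X) (cm_coact M X X m)) = m)].

Definition is_comod_mor (M N : comodule) (f : forall X, cm_obj M X -> cm_obj N X) : Prop :=
  (forall X, linear (f X)) /\
  (forall X Y (m : cm_obj M X), cm_coact N X Y (f X m) = tmap (f Y) id (cm_coact M X Y m)).

Variable A : algType K.
Variable psi : forall X Y, tensor (C X Y) A -> tensor A (C X Y).

Record entwined := Entwined {
  em_obj : Ob -> lmodType K;
  em_coact : forall X Y, em_obj X -> tensor (em_obj Y) (C X Y);
  em_act : forall X, em_obj X -> A -> em_obj X }.

Definition Gobj (N : entwined) : comodule := Comodule (em_obj N) (em_coact N).

Definition is_right_module (V : lmodType K) (act : V -> A -> V) : Prop :=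
  [/\ (forall a, linear (act^~ a)), (forall m, linear (act m)),
      (forall m, act m 1 = m) & (forall m a b, act (act m a) b = act m (a * b))].

Definition is_entwined (N : entwined) : Prop :=
  [/\ is_comodule (Gobj N),
      (forall X, is_right_module (em_obj N X) (em_act N X)) &
      (forall X Y (m : em_obj N X) (a : A),
          em_coact N X Y (em_act N X m a)
          = tmap (tlift (em_act N Y)) id
              (tassoc_inv (tmap id (@psi X Y) (tassoc (tmap (em_coact N X Y) id (tpure m a))))))].

Definition is_entw_mor (M N : entwined) (f : forall X, em_obj M X -> em_obj N X) : Prop :=
  is_comod_mor (Gobj M) (Gobj N) f /\
  (forall X (m : em_obj M X) (a : A), f X (em_act M X m a) = em_act N X (f X m) a).

Definition Fobj (M : comodule) : entwined :=
  Entwined (fun X => tensor (cm_obj M X) A)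
    (fun X Y x => tassoc_inv (tmap id (@psi X Y) (tassoc (tmap (cm_coact M X Y) id x))))
    (fun X x b => tmap id (fun a : A => a * b) x).

Definition Fmor (M N : comodule) (f : forall X, cm_obj M X -> cm_obj N X) :
    forall X, em_obj (Fobj M) X -> em_obj (Fobj N) X :=
  fun X => tmap (f X) id.
End Entwining.

Arguments is_coalgebra {K Ob} C delta eps.
Arguments is_entwining {K Ob} C delta eps A psi.
Arguments cm_obj {K Ob C} c _.
Arguments cm_coact {K Ob C} c X Y _.
Arguments em_obj {K Ob C A} e _.
Arguments em_coact {K Ob C A} e X Y _.
Arguments em_act {K Ob C A} e X _ _.
Arguments is_comodule {K Ob C} delta eps M.
Arguments is_comod_mor {K Ob C} M N f.
Arguments Gobj {K Ob C A} N.
Arguments is_entwined {K Ob C} delta eps {A} psi N.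
Arguments is_entw_mor {K Ob C A} M N f.
Arguments Fobj {K Ob C A} psi M.
Arguments Fmor {K Ob C A} psi {M N} f X _.

From HB Require Import structures.
From mathcomp Require Import all_boot all_order all_algebra generic_quotient.
Set Implicit Arguments. Unset Strict Implicit. Unset Printing Implicit Defensive.
Import GRing.Theory.
Local Open Scope ring_scope.

(* The unit of the adjunction is [m |-> m (x) 1] and its counit is [n (x) a |-> n a], so
   the two bijections are [g |-> g (- (x) 1)] and [f |-> (m (x) a |-> f(m) a)].  Every
   identity to be checked is an equation between linear maps out of a tensor product,
   hence it suffices to check it on pure tensors, where it unfolds to one of the
   entwining axioms: (i) makes the coaction of [M (x) A] coassociative, (iv) makes it
   counital, (ii) makes it compatible with the action of [A], and (iii) makes
   [m |-> m (x) 1] a comodule map. *)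

Section TensorCalculus.
Variable K : fieldType.
Implicit Types V W U P : lmodType K.

Lemma tlift_tpure V W U (b : V -> W -> U) v w : bilinear_map b -> tlift b (tpure v w) = b v w.
Proof. by move=> hb; rewrite /tlift tsum_repr // /tsum big_seq1. Qed.

Lemma tliftD V W U (b : V -> W -> U) (x y : tensor V W) : bilinear_map b ->
  tlift b (x + y) = tlift b x + tlift b y.
Proof.
move=> hb; rewrite /tlift; change (x + y) with (tadd x y).
by rewrite /tadd tsum_repr // tsum_cat.
Qed.

Lemma tliftZ V W U (b : V -> W -> U) k (x : tensor V W) : bilinear_map b ->
  tlift b (k *: x) = k *: tlift b x.
Proof.
move=> hb; rewrite /tlift; change (k *: x) with (tscale k x).
by rewrite /tscale tsum_repr // tsum_scale.
Qed.

Lemma tlift0 V W U (b : V -> W -> U) : bilinear_map b -> tlift b (0 : tensor V W) = 0.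
Proof. by move=> hb; rewrite /tlift tsum_repr // /tsum big_nil. Qed.

Lemma linear_tlift V W U (b : V -> W -> U) : bilinear_map b -> linear (tlift b).
Proof. by move=> hb k x y; rewrite tliftD // tliftZ. Qed.

Lemma linear_tlift_param P V W U (b : P -> V -> W -> U) x :
  (forall v w, linear (fun p => b p v w)) -> linear (fun p => tlift (b p) x).
Proof.
move=> hb k p q; rewrite /tlift /tsum scaler_sumr -big_split /=.
by apply: eq_bigr => vw _; apply: hb.
Qed.

Lemma tensor_sum_tpure V W (x : tensor V W) : x = \sum_(p <- repr x) tpure p.1 p.2.
Proof.
apply: tensor_ext => U b hb; rewrite -[RHS]/(tlift b _).
rewrite (big_morph (tlift b) (fun x y => tliftD x y hb) (tlift0 hb)).
by apply: eq_bigr => p _; rewrite tlift_tpure.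
Qed.

Lemma tensor_linear_ext V W U (F G : tensor V W -> U) : linear F -> linear G ->
  (forall v w, F (tpure v w) = G (tpure v w)) -> forall x, F x = G x.
Proof.
move=> lF lG FG x; rewrite (tensor_sum_tpure x).
rewrite (big_morph F (linD lF) (lin0 lF)) (big_morph G (linD lG) (lin0 lG)).
by apply: eq_bigr => p _; rewrite FG.
Qed.

Lemma bilinear_tpure V W : bilinear_map (@tpure K V W).
Proof.
split=> [w|v] k x y; apply: tensor_ext => U b [bl br];
  rewrite -![tsum b (repr _)]/(tlift b _) tliftD ?tliftZ ?tlift_tpure //;
  by [rewrite bl | rewrite br].
Qed.

Lemma linear_tpurel V W (w : W) : linear (fun v : V => tpure v w).
Proof. by case: (bilinear_tpure V W). Qed.

Lemma linear_tpurer V W (v : V) : linear (fun w : W => tpure v w).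
Proof. by case: (bilinear_tpure V W). Qed.

Lemma tpureZl V W (v : V) (w : W) k : tpure (k *: v) w = k *: tpure v w.
Proof. exact: (linZ (linear_tpurel w)). Qed.

Lemma tpureZr V W (v : V) (w : W) k : tpure v (k *: w) = k *: tpure v w.
Proof. exact: (linZ (linear_tpurer v)). Qed.

Lemma linear_id V : linear (fun x : V => x).
Proof. by []. Qed.

Lemma linear_comp V W U (f : W -> U) (g : V -> W) : linear f -> linear g ->
  linear (fun x => f (g x)).
Proof. by move=> lf lg k x y; rewrite lg lf. Qed.

Lemma linear_tpurel_comp P V W (f : P -> V) (w : W) : linear f -> linear (fun p => tpure (f p) w).
Proof. by move=> lf; apply: linear_comp (linear_tpurel w) lf. Qed.

Lemma linear_tpurer_comp P V W (v : V) (g : P -> W) : linear g -> linear (fun p => tpure v (g p)).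
Proof. by move=> lg; apply: linear_comp (linear_tpurer v) lg. Qed.

Lemma bilinear_tpure_map V W V' W' (f : V -> V') (g : W -> W') : linear f -> linear g ->
  bilinear_map (fun v w => tpure (f v) (g w)).
Proof. by move=> lf lg; split=> [w|v]; [apply: linear_tpurel_comp | apply: linear_tpurer_comp]. Qed.

Lemma linear_tmap V W V' W' (f : V -> V') (g : W -> W') : linear f -> linear g ->
  linear (tmap f g).
Proof. by move=> lf lg; apply/linear_tlift/bilinear_tpure_map. Qed.

Lemma tmap_tpure V W V' W' (f : V -> V') (g : W -> W') v w : linear f -> linear g ->
  tmap f g (tpure v w) = tpure (f v) (g w).
Proof. by move=> lf lg; rewrite /tmap tlift_tpure //; apply: bilinear_tpure_map. Qed.

Lemma bilinear_tassoc U V W :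
  bilinear_map (fun (x : tensor U V) (w : W) => tlift (fun u v => tpure u (tpure v w)) x).
Proof.
split=> [w|x].
- by apply/linear_tlift/bilinear_tpure_map => //; apply: linear_tpurel.
- by apply: linear_tlift_param => u v; apply/linear_tpurer_comp/linear_tpurer.
Qed.

Lemma linear_tassoc U V W : linear (@tassoc K U V W).
Proof. exact/linear_tlift/bilinear_tassoc. Qed.

Lemma tassoc_tpure U V W (u : U) (v : V) (w : W) :
  tassoc (tpure (tpure u v) w) = tpure u (tpure v w).
Proof.
rewrite /tassoc tlift_tpure ?tlift_tpure //; last exact: bilinear_tassoc.
by apply: bilinear_tpure_map => //; apply: linear_tpurel.
Qed.

Lemma bilinear_tassoc_inv U V W :
  bilinear_map (fun (u : U) (y : tensor V W) => tlift (fun v w => tpure (tpure u v) w) y).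
Proof.
split=> [y|u].
- by apply: linear_tlift_param => v w; apply/linear_tpurel_comp/linear_tpurel.
- by apply/linear_tlift/bilinear_tpure_map => //; apply: linear_tpurer.
Qed.

Lemma linear_tassoc_inv U V W : linear (@tassoc_inv K U V W).
Proof. exact/linear_tlift/bilinear_tassoc_inv. Qed.

Lemma tassoc_inv_tpure U V W (u : U) (v : V) (w : W) :
  tassoc_inv (tpure u (tpure v w)) = tpure (tpure u v) w.
Proof.
rewrite /tassoc_inv tlift_tpure ?tlift_tpure //; last exact: bilinear_tassoc_inv.
by apply: bilinear_tpure_map => //; apply: linear_tpurer.
Qed.

Lemma bilinear_scale_swap V : bilinear_map (fun (v : V) (k : K^o) => k *: v).
Proof.
split=> [k|v] a x y /=; first by rewrite scalerDr !scalerA mulrC.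
by rewrite scalerDl -scalerA.
Qed.

Lemma linear_trunit V : linear (@trunit K V).
Proof. exact/linear_tlift/bilinear_scale_swap. Qed.

Lemma trunit_tpure V (v : V) (k : K^o) : trunit (tpure v k) = k *: v.
Proof. by rewrite /trunit tlift_tpure //; apply: bilinear_scale_swap. Qed.

Lemma bilinear_mul (A : algType K) : bilinear_map (fun a b : A => a * b).
Proof.
split=> [b|a] k x y /=; first by rewrite mulrDl scalerAl.
by rewrite mulrDr scalerAr.
Qed.

Lemma linear_mulr (A : algType K) (b : A) : linear (fun a : A => a * b).
Proof. by case: (bilinear_mul A). Qed.

Lemma linear_mull (A : algType K) (a : A) : linear (fun b : A => a * b).
Proof. by case: (bilinear_mul A). Qed.

Lemma alg_mul_tpure (A : algType K) (a b : A) : @alg_mul K A (tpure a b) = a * b.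
Proof. by rewrite /alg_mul tlift_tpure //; apply: bilinear_mul. Qed.

Lemma bilinear_mapP V W U (b : V -> W -> U) :
  (forall w, linear (fun v => b v w)) -> (forall v, linear (fun w => b v w)) -> bilinear_map b.
Proof. by split. Qed.

Section RightModule.
Variables (A : algType K) (V : lmodType K) (act : V -> A -> V).
Hypothesis act_module : is_right_module K A V act.

Lemma linear_act_comp a P (h : P -> V) : linear h -> linear (fun p => act (h p) a).
Proof. by case: act_module => actl _ _ _; apply: linear_comp (actl a). Qed.

Lemma linear_actr m : linear (act m).
Proof. by case: act_module. Qed.
End RightModule.
End TensorCalculus.

Ltac linear_comp_step :=
  match goal with |- ?L (fun y => ?F (@?G y)) =>
    tryif (match G with (fun z => z) => idtac end) then fail
    else apply: (@linear_comp _ _ _ _ F G) end.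

Create HintDb linearity.

Ltac linearity := repeat first
  [ solve [auto with linearity] | progress cbv beta | progress autounfold with linearity
  | match goal with |- forall _, _ => intro end
  | apply: linear_id | apply: linear_tassoc | apply: linear_tassoc_inv | apply: linear_trunit
  | apply: linear_tpurel_comp | apply: linear_tpurer_comp
  | apply: linear_mulr | apply: linear_mull
  | apply: linear_tmap | apply: linear_tlift
  | match goal with H : _ |- _ => apply: H end
  | apply: bilinear_mapP | apply: linear_tlift_param
  | linear_comp_step ].

Ltac tensor_simpl := repeat (first
  [ rewrite tmap_tpure | rewrite tassoc_tpure | rewrite tassoc_inv_tpure
  | rewrite trunit_tpure | rewrite alg_mul_tpure | rewrite tlift_tpure ]; try solve [linearity]).

Tactic Notation "elim_tensor" constr(t) "as" ident(v) ident(w) :=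
  move: t; apply: tensor_linear_ext; [solve [linearity] | solve [linearity] | intros v w; cbv beta].

Lemma tensor_right_module (K : fieldType) (A : algType K) (V : lmodType K) :
  is_right_module K A (tensor V A) (fun x b => tmap id (fun a : A => a * b) x).
Proof.
split=> [b|x|x|x a b].
- by linearity.
- by linearity.
- by elim_tensor x as v a; tensor_simpl; rewrite mulr1.
- by elim_tensor x as v c; tensor_simpl; rewrite mulrA.
Qed.

Lemma tmap_comp (K : fieldType) (V W V' W' V'' W'' : lmodType K)
    (f : V' -> V'') (g : W' -> W'') (f' : V -> V') (g' : W -> W') x :
  linear f -> linear g -> linear f' -> linear g' ->
  tmap f g (tmap f' g' x) = tmap (fun v => f (f' v)) (fun w => g (g' w)) x.
Proof. by move=> *; elim_tensor x as v w; tensor_simpl. Qed.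

Section Entwining.
Local Unset Implicit Arguments.
Variables (K : fieldType) (Ob : Type) (C : Ob -> Ob -> lmodType K).
Variable delta : forall X Y Z, C X Z -> tensor (C Y Z) (C X Y).
Variable eps : forall X, C X X -> K^o.
Variables (A : algType K) (psi : forall X Y, tensor (C X Y) A -> tensor A (C X Y)).
Hypothesis delta_linear : forall X Y Z, linear (delta X Y Z).
Hypothesis eps_linear : forall X, linear (eps X).
Hypothesis psi_linear : forall X Y, linear (psi X Y).
(* Axioms (i)-(iv) of [is_entwining], stated one by one so that each lemma below depends
   only on the axioms it uses. *)
Hypothesis psi_delta : forall X Y Z (t : tensor (C X Z) A),
  tmap id (delta X Y Z) (psi X Z t)
  = tassoc (tmap (psi Y Z) id
      (tassoc_inv (tmap id (psi X Y) (tassoc (tmap (delta X Y Z) id t))))).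
Hypothesis psi_mul : forall X Z (t : tensor (C X Z) (tensor A A)),
  psi X Z (tmap id (@alg_mul K A) t)
  = tmap (@alg_mul K A) id
      (tassoc_inv (tmap id (psi X Z) (tassoc (tmap (psi X Z) id (tassoc_inv t))))).
Hypothesis psi_unit : forall X Z (f : C X Z), psi X Z (tpure f 1) = tpure 1 f.
Hypothesis psi_counit : forall Z (g : C Z Z) (a : A),
  trunit (tmap id (eps Z) (psi Z Z (tpure g a))) = eps Z g *: a.
Local Set Implicit Arguments.

(* For [t = t_0 (x) t_1], [twist t a = (t_0 (x) a_psi) (x) t_1^psi]; the coaction of
   [M (x) A] is [m (x) a |-> twist (rho m) a]. *)
Definition twist {V : lmodType K} {X Y} (t : tensor V (C X Y)) (a : A) :
    tensor (tensor V A) (C X Y) :=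
  tassoc_inv (tmap id (psi X Y) (tassoc (tpure t a))).

(* [(c (x) c') (x) a |-> a_psi_psi (x) (c^psi (x) c'^psi)]: axiom (i) says that
   [(id (x) delta) o psi = psi_twice o (delta (x) id)]. *)
Definition psi_twice {X Z Y} (u : tensor (C Z Y) (C X Z)) (a : A) :
    tensor A (tensor (C Z Y) (C X Z)) :=
  tassoc (tmap (psi Z Y) id (twist u a)).

#[local] Hint Unfold twist psi_twice : linearity.

Lemma twist_tpure (V : lmodType K) X Y (v : V) (c : C X Y) a :
  twist (tpure v c) a = tassoc_inv (tpure v (psi X Y (tpure c a))).
Proof. by rewrite /twist; tensor_simpl. Qed.

Lemma twist_tmap (V V' : lmodType K) X Y (g : V -> V') (t : tensor V (C X Y)) a :
  linear g -> twist (tmap g id t) a = tmap (tmap g id) id (twist t a).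
Proof.
move=> g_linear; elim_tensor t as v c; tensor_simpl; rewrite !twist_tpure.
by elim_tensor (psi X Y (tpure c a)) as a' c'; tensor_simpl.
Qed.

Lemma psi_delta_tpure X Z Y (c : C X Y) a :
  tmap id (delta X Z Y) (psi X Y (tpure c a)) = psi_twice (delta X Z Y c) a.
Proof. by rewrite psi_delta /psi_twice /twist; tensor_simpl. Qed.

Lemma twist_delta (V : lmodType K) X Z Y (t : tensor V (C X Y)) a :
  tmap id (delta X Z Y) (twist t a)
  = tassoc_inv (tmap id (psi_twice^~ a) (tmap id (delta X Z Y) t)).
Proof.
elim_tensor t as v c; rewrite twist_tpure; tensor_simpl; rewrite -psi_delta_tpure.
by elim_tensor (psi X Y (tpure c a)) as a' c'; tensor_simpl.
Qed.

Lemma twist_counit (V : lmodType K) X (t : tensor V (C X X)) a :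
  trunit (tmap id (eps X) (twist t a)) = tpure (trunit (tmap id (eps X) t)) a.
Proof.
elim_tensor t as v c; rewrite twist_tpure; tensor_simpl.
rewrite tpureZl -tpureZr -psi_counit.
by elim_tensor (psi X X (tpure c a)) as a' c'; tensor_simpl; rewrite tpureZr.
Qed.

Lemma twist_unit (V : lmodType K) X Y (t : tensor V (C X Y)) :
  twist t 1 = tmap (fun v => tpure v 1) id t.
Proof. by elim_tensor t as v c; rewrite twist_tpure psi_unit; tensor_simpl. Qed.

Lemma twist_mul (V : lmodType K) X Y (t : tensor V (C X Y)) a b :
  twist t (a * b)
  = tmap (tlift (fun x b => tmap id (fun a : A => a * b) x)) id
      (tassoc_inv (tmap id (psi X Y) (tassoc (tpure (twist t a) b)))).
Proof.
elim_tensor t as v c; rewrite !twist_tpure; tensor_simpl.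
have := psi_mul X Y (tpure c (tpure a b)); tensor_simpl => ->.
elim_tensor (psi X Y (tpure c a)) as a' c'; tensor_simpl.
by elim_tensor (psi X Y (tpure c' b)) as a'' c''; tensor_simpl.
Qed.

Lemma Fobj_act_tpure (M : comodule K Ob C) X m (a b : A) :
  em_act (Fobj psi M) X (tpure m a) b = tpure m (a * b).
Proof. by rewrite /= tmap_tpure //; apply: linear_mulr. Qed.

Lemma Fobj_coact_linear (M : comodule K Ob C) X Y :
  is_comodule delta eps M -> linear (em_coact (Fobj psi M) X Y).
Proof. by case=> coact_linear _ _ /=; linearity. Qed.

(* ssreflect's [apply:] is needed: [em_obj (Fobj psi M) X] has to be unfolded to
   [tensor (cm_obj M X) A] to match the goals. *)
#[local] Hint Extern 1 (GRing.linear_for _ _) =>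
  apply: Fobj_coact_linear; assumption : linearity.

Lemma Fobj_coact_tpure (M : comodule K Ob C) X Y m a : is_comodule delta eps M ->
  em_coact (Fobj psi M) X Y (tpure m a) = twist (cm_coact M X Y m) a.
Proof. by case=> coact_linear _ _; rewrite /= tmap_tpure //; apply: coact_linear. Qed.

Section FreeEntwined.
Variable M : comodule K Ob C.
Hypothesis M_comodule : is_comodule delta eps M.
Local Notation FM := (Fobj psi M).

Lemma Fobj_coact_twist X Z Y (t : tensor (cm_obj M Z) (C X Z)) a :
  tassoc (tmap (em_coact FM Z Y) id (twist t a))
  = tassoc_inv (tmap id (psi_twice^~ a) (tassoc (tmap (cm_coact M Z Y) id t))).
Proof.
have [coact_linear _ _] := M_comodule.
have twist_tpure_left n (s : tensor A (C X Z)) :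
    tassoc (tmap (em_coact FM Z Y) id (tassoc_inv (tpure n s)))
    = tassoc (tmap (twist (cm_coact M Z Y n)) id s).
  by elim_tensor s as a' c'; tensor_simpl; rewrite Fobj_coact_tpure.
elim_tensor t as n c2; rewrite twist_tpure twist_tpure_left; tensor_simpl.
elim_tensor (cm_coact M Z Y n) as n1 c1; tensor_simpl; rewrite /psi_twice twist_tpure.
elim_tensor (psi X Z (tpure c2 a)) as a' c'; tensor_simpl; rewrite twist_tpure.
by elim_tensor (psi Z Y (tpure c1 a')) as a'' c''; tensor_simpl.
Qed.

Lemma Fobj_coact_coassoc X Z Y (x : em_obj FM X) :
  tassoc (tmap (em_coact FM Z Y) id (em_coact FM X Z x))
  = tmap id (delta X Z Y) (em_coact FM X Y x).
Proof.
have [coact_linear coact_coassoc _] := M_comodule.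
elim_tensor x as m a.
by rewrite !Fobj_coact_tpure // Fobj_coact_twist twist_delta coact_coassoc.
Qed.

Lemma Fobj_coact_counit X (x : em_obj FM X) : trunit (tmap id (eps X) (em_coact FM X X x)) = x.
Proof.
have [coact_linear _ coact_counit] := M_comodule.
by elim_tensor x as m a; rewrite Fobj_coact_tpure // twist_counit coact_counit.
Qed.

Lemma Fobj_coact_act X Y (x : em_obj FM X) b :
  em_coact FM X Y (em_act FM X x b)
  = tmap (tlift (em_act FM Y)) id
      (tassoc_inv (tmap id (psi X Y) (tassoc (tmap (em_coact FM X Y) id (tpure x b))))).
Proof.
have [coact_linear _ _] := M_comodule.
elim_tensor x as m a; rewrite Fobj_act_tpure !Fobj_coact_tpure // twist_mul.
by tensor_simpl; rewrite Fobj_coact_tpure.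
Qed.

Lemma Fobj_entwined : is_entwined delta eps psi FM.
Proof.
split; first split.
- by move=> X Y; apply: Fobj_coact_linear.
- exact: Fobj_coact_coassoc.
- exact: Fobj_coact_counit.
- by move=> X; apply: tensor_right_module.
- exact: Fobj_coact_act.
Qed.
End FreeEntwined.

Lemma Fmor_entw_mor (M N : comodule K Ob C) (f : forall X, cm_obj M X -> cm_obj N X) :
  is_comodule delta eps M -> is_comodule delta eps N -> is_comod_mor M N f ->
  is_entw_mor (Fobj psi M) (Fobj psi N) (Fmor psi f).
Proof.
move=> M_comodule N_comodule [f_linear f_colinear]; rewrite /Fmor.
split; first split.
- by move=> X; linearity.
- move=> X Y x; cbn [cm_coact Gobj]; elim_tensor x as m a; tensor_simpl.
  by rewrite !Fobj_coact_tpure // f_colinear twist_tmap.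
- by move=> X x b; cbn [em_act Fobj]; elim_tensor x as m a; tensor_simpl.
Qed.

Lemma entwined_right_module (N : entwined K Ob C A) X :
  is_entwined delta eps psi N -> is_right_module K A (em_obj N X) (em_act N X).
Proof. by case. Qed.

#[local] Hint Extern 1 (GRing.linear_for _ _) =>
  apply: linear_act_comp; [apply: entwined_right_module; eassumption | linearity] : linearity.
#[local] Hint Extern 1 (GRing.linear_for _ _) =>
  apply: linear_actr; apply: entwined_right_module; eassumption : linearity.

(* [X] stays explicit, as in the types of [Phi] and [Psi] in the theorem. *)
Local Unset Implicit Arguments.
Definition unit_transpose {M : comodule K Ob C} {N : entwined K Ob C A}
    (g : forall X, em_obj (Fobj psi M) X -> em_obj N X) X (m : cm_obj M X) : em_obj N X :=
  g X (tpure m 1).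

Definition counit_transpose {M : comodule K Ob C} {N : entwined K Ob C A}
    (f : forall X, cm_obj M X -> em_obj N X) X : em_obj (Fobj psi M) X -> em_obj N X :=
  tlift (fun m a => em_act N X (f X m) a).
Local Set Implicit Arguments.

#[local] Hint Unfold unit_transpose counit_transpose : linearity.

Section Transposes.
Variables (M : comodule K Ob C) (N : entwined K Ob C A).
Hypotheses (M_comodule : is_comodule delta eps M) (N_entwined : is_entwined delta eps psi N).

Lemma unit_transpose_comod_mor g :
  is_entw_mor (Fobj psi M) N g -> is_comod_mor M (Gobj N) (unit_transpose g).
Proof.
have [coact_linear _ _] := M_comodule.
move=> [[g_linear g_colinear] _]; split=> [X|X Y m]; first by linearity.
rewrite /unit_transpose g_colinear; cbn [cm_coact Gobj].
by rewrite Fobj_coact_tpure // twist_unit tmap_comp //; linearity.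
Qed.

Lemma counit_transpose_entw_mor f :
  is_comod_mor M (Gobj N) f -> is_entw_mor (Fobj psi M) N (counit_transpose f).
Proof.
have [coact_linear _ _] := M_comodule.
have [[N_coact_linear _ _] N_module N_compat] := N_entwined.
move=> [f_linear f_colinear]; split; first split.
- by move=> X; linearity.
- move=> X Y x; cbn [cm_coact Gobj]; elim_tensor x as m a.
  rewrite Fobj_coact_tpure // /counit_transpose; tensor_simpl.
  rewrite N_compat; tensor_simpl; rewrite (f_colinear X Y m : em_coact N X Y (f X m) = _).
  elim_tensor (cm_coact M X Y m) as n c; rewrite twist_tpure; tensor_simpl.
  by elim_tensor (psi X Y (tpure c a)) as a' c'; tensor_simpl.
- move=> X x b; elim_tensor x as m a.
  rewrite Fobj_act_tpure /counit_transpose; tensor_simpl.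
  by case: (N_module X) => _ _ _ ->.
Qed.

Lemma counit_transposeK g : is_entw_mor (Fobj psi M) N g ->
  forall X x, counit_transpose (unit_transpose g) X x = g X x.
Proof.
move=> [[g_linear _] g_act] X x; elim_tensor x as m a.
by rewrite /counit_transpose /unit_transpose; tensor_simpl; rewrite -g_act Fobj_act_tpure mul1r.
Qed.

Lemma unit_transposeK f : is_comod_mor M (Gobj N) f ->
  forall X m, unit_transpose (counit_transpose f) X m = f X m.
Proof.
move=> [f_linear _] X m; rewrite /unit_transpose /counit_transpose; tensor_simpl.
by case: (entwined_right_module X N_entwined).
Qed.
End Transposes.

Lemma unit_transpose_natural (M' M : comodule K Ob C) (N N' : entwined K Ob C A)
    (h : forall X, cm_obj M' X -> cm_obj M X) (k : forall X, em_obj N X -> em_obj N' X)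
    (g : forall X, em_obj (Fobj psi M) X -> em_obj N X) X (m : cm_obj M' X) :
  linear (h X) ->
  unit_transpose (fun Y x => k Y (g Y (Fmor psi h Y x))) X m = k X (unit_transpose g X (h X m)).
Proof. by move=> h_linear; rewrite /unit_transpose /Fmor tmap_tpure. Qed.
End Entwining.

Arguments unit_transpose {K Ob C A} psi {M N} g X m.
Arguments counit_transpose {K Ob C A} psi {M N} f X _.

Theorem proposition2p6 (K : fieldType) (Ob : Type) (C : Ob -> Ob -> lmodType K)
  (delta : forall X Y Z : Ob, C X Z -> tensor (C Y Z) (C X Y))
  (eps : forall X : Ob, C X X -> K^o)
  (A : algType K) (psi : forall X Y : Ob, tensor (C X Y) A -> tensor A (C X Y)) :
  is_coalgebra C delta eps ->
  is_entwining C delta eps A psi ->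
  (* F_psi is a functor from Com^C to Com^C_A(psi) *)
  (forall M : comodule K Ob C,
     is_comodule delta eps M -> is_entwined delta eps psi (Fobj psi M)) /\
  (forall (M N : comodule K Ob C) (f : forall X, cm_obj M X -> cm_obj N X),
     is_comodule delta eps M -> is_comodule delta eps N -> is_comod_mor M N f ->
     is_entw_mor (Fobj psi M) (Fobj psi N) (Fmor psi f)) /\
  (* natural bijections  Com^C_A(psi)(M (x) A, N) ~= Com^C(M, G N) *)
  exists (Phi : forall (M : comodule K Ob C) (N : entwined K Ob C A),
            (forall X, em_obj (Fobj psi M) X -> em_obj N X) -> forall X, cm_obj M X -> em_obj N X)
         (Psi : forall (M : comodule K Ob C) (N : entwined K Ob C A),
            (forall X, cm_obj M X -> em_obj N X) -> forall X, em_obj (Fobj psi M) X -> em_obj N X),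
  [/\ (forall M N g, is_comodule delta eps M -> is_entwined delta eps psi N ->
         is_entw_mor (Fobj psi M) N g -> is_comod_mor M (Gobj N) (Phi M N g)),
      (forall M N f, is_comodule delta eps M -> is_entwined delta eps psi N ->
         is_comod_mor M (Gobj N) f -> is_entw_mor (Fobj psi M) N (Psi M N f)),
      (forall M N g, is_comodule delta eps M -> is_entwined delta eps psi N ->
         is_entw_mor (Fobj psi M) N g -> forall X x, Psi M N (Phi M N g) X x = g X x),
      (forall M N f, is_comodule delta eps M -> is_entwined delta eps psi N ->
         is_comod_mor M (Gobj N) f -> forall X m, Phi M N (Psi M N f) X m = f X m) &
      (forall (M' M : comodule K Ob C) (N N' : entwined K Ob C A)
              (h : forall X, cm_obj M' X -> cm_obj M X)
              (k : forall X, em_obj N X -> em_obj N' X)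
              (g : forall X, em_obj (Fobj psi M) X -> em_obj N X),
         is_comodule delta eps M' -> is_comodule delta eps M ->
         is_entwined delta eps psi N -> is_entwined delta eps psi N' ->
         is_comod_mor M' M h -> is_entw_mor N N' k -> is_entw_mor (Fobj psi M) N g ->
         forall X (m : cm_obj M' X),
           Phi M' N' (fun Y x => k Y (g Y (Fmor psi h Y x))) X m = k X (Phi M N g X (h X m)))].
Proof.
move=> [delta_linear eps_linear _ _ _] [psi_linear psi_delta psi_mul psi_unit psi_counit].
split; [|split].
- by move=> M; apply: Fobj_entwined.
- move=> M N f M_comodule N_comodule.
  exact: (Fmor_entw_mor psi_linear M_comodule N_comodule).
exists (fun M N g => unit_transpose psi g), (fun M N f => counit_transpose psi f).
split.
- move=> M N g M_comodule _; exact: (unit_transpose_comod_mor psi_linear psi_unit M_comodule).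
- move=> M N f M_comodule N_entwined.
  exact: (counit_transpose_entw_mor psi_linear M_comodule N_entwined).
- move=> M N g _ N_entwined; exact: (counit_transposeK N_entwined).
- move=> M N f _ N_entwined; exact: (unit_transposeK N_entwined).
- move=> M' M N N' h k g _ _ _ _ [h_linear _] _ _ X m.
  exact: unit_transpose_natural (h_linear X).
Qed.
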